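(* Fix $k\ge 2$ and let $D$ be either $A$ or $S$. Assume that for every sorted $2k$-tuple $x_1\le\dots\le x_{2k}$ of reals, the partition of $\{1,\dots,2k\}$ into $\{1,\dots,k\}$ and $\{k+1,\dots,2k\}$ is a minimal $k$-tuple partition with respect to $D$. Then for every $n\ge 1$ and every sorted $kn$-tuple $x_1\le x_2\le\dots\le x_{kn}$ of reals, the partition of $\{1,\dots,kn\}$ into the consecutive blocks $$B_i=\{(i-1)k+1,\,(i-1)k+2,\,\dots,\,ik\},\qquad i=1,\dots,n,$$ is a minimal $k$-tuple partition with respect to $D$.
   Context: For real numbers $x_1,\dots,x_k$ (repetitions allowed) define $A(x_1,\dots,x_k)=\sum_{1\le i<j\le k}|x_j-x_i|$ and $S(x_1,\dots,x_k)=\sum_{1\le i<j\le k}(x_j-x_i)^2$. Both depend only on the multiset of entries. Given real numbers $x_1,\dots,x_{kn}$, a $k$-tuple partition is a partition of the index set $\{1,\dots,kn\}$ into $n$ blocks, each of size $k$. The cost of the partition is the sum over the blocks $\{i_1,\dots,i_k\}$ of $D(x_{i_1},\dots,x_{i_k})$. A $k$-tuple partition is minimal with respect to $D$ if its cost is less than or equal to the cost of every other $k$-tuple partition. *)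

(* Reals are modelled by an arbitrary realFieldType R
   (the statement is purely order/algebraic). *)
From HB Require Import structures.
From mathcomp Require Import all_boot all_order all_algebra.
Set Implicit Arguments. Unset Strict Implicit. Unset Printing Implicit Defensive.
Import Order.TTheory GRing.Theory Num.Theory.
Local Open Scope ring_scope.

Definition Asum (R : realFieldType) (s : seq R) : R :=
  \sum_(i < size s) \sum_(j < size s | (i < j)%N) `|s`_j - s`_i|.

Definition Ssum (R : realFieldType) (s : seq R) : R :=
  \sum_(i < size s) \sum_(j < size s | (i < j)%N) (s`_j - s`_i) ^+ 2.

Definition ktuple_partition (N k : nat) (P : {set {set 'I_N}}) : Prop :=
  partition P [set: 'I_N] /\ forall B, B \in P -> #|B| = k.

Definition pcost (R : realFieldType) (N : nat) (D : seq R -> R)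
    (x : 'I_N -> R) (P : {set {set 'I_N}}) : R :=
  \sum_(B in P) D [seq x i | i <- enum B].

Definition minimal_ktuple (R : realFieldType) (N k : nat) (D : seq R -> R)
    (x : 'I_N -> R) (P : {set {set 'I_N}}) : Prop :=
  ktuple_partition k P /\
  forall Q, ktuple_partition k Q -> pcost D x P <= pcost D x Q.

(* Consecutive blocks B_m = {m k, ..., m k + k - 1} (0-indexed), m < n. *)
Definition consec_blocks (k n : nat) : {set {set 'I_(k * n)}} :=
  [set [set i : 'I_(k * n) | (i %/ k)%N == val m] | m : 'I_n].

Definition sorted_fun (R : realFieldType) (N : nat) (x : 'I_N -> R) : Prop :=
  forall i j : 'I_N, (i <= j)%N -> x i <= x j.

From mathcomp Require Import all_boot all_order all_algebra zify.
Import Order.TTheory GRing.Theory Num.Theory.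
Set Implicit Arguments. Unset Strict Implicit. Unset Printing Implicit Defensive.

(* Among the k-tuple partitions whose cost does not exceed that of a given one,
   take one maximising the potential, the sum over the blocks of the square of
   their index sum. If two of its blocks interleave, re-split their union into
   its k lowest and k highest indices: since D is invariant under reordering,
   the hypothesis on sorted 2k-tuples shows that this does not increase the
   cost, while the new lower block has the smallest index sum of the four, so
   the potential strictly increases. Hence the blocks are pairwise ordered,
   which forces them to be the consecutive blocks. *)

Section PairSums.
Local Open Scope ring_scope.
Variables (R : numDomainType) (F : R -> R -> R).
Hypotheses (F_sym : forall a b, F a b = F b a) (F_diag : forall a, F a a = 0).

Lemma sum_pairs_double (s : seq R) :
  \sum_(a <- s) \sum_(b <- s) F a b =
  (\sum_(i < size s) \sum_(j < size s | (i < j)%N) F s`_i s`_j) *+ 2.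
Proof.
have nth_sum G : \sum_(b <- s) G b = \sum_(j < size s) G s`_j.
  by rewrite (big_nth 0) big_mkord.
rewrite nth_sum; under eq_bigr => i _ do rewrite nth_sum.
have split_lt (i : 'I_(size s)) : \sum_(j < size s) F s`_i s`_j =
    \sum_(j < size s | (i < j)%N) F s`_i s`_j +
    \sum_(j < size s | (j < i)%N) F s`_i s`_j.
  rewrite (bigID (fun j : 'I__ => (i < j)%N)) /=; congr (_ + _).
  rewrite big_mkcond [RHS]big_mkcond; apply: eq_bigr => j _.
  by case: (ltngtP i j) => // eq_ij; rewrite (val_inj eq_ij) F_diag.
under eq_bigr => i _ do rewrite split_lt.
rewrite big_split mulr2n /=; congr (_ + _).
rewrite (exchange_big_dep xpredT) //=; apply: eq_bigr => i _.
by apply: eq_bigr => j _; rewrite F_sym.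
Qed.

Lemma sum_pairs_perm (s t : seq R) : perm_eq s t ->
  \sum_(i < size s) \sum_(j < size s | (i < j)%N) F s`_i s`_j =
  \sum_(i < size t) \sum_(j < size t | (i < j)%N) F t`_i t`_j.
Proof.
move=> st; apply/eqP; rewrite -(eqr_pMn2r (n := 2)) // -!sum_pairs_double.
by rewrite (perm_big _ st); apply/eqP/eq_bigr => a _; apply: perm_big.
Qed.

End PairSums.

Lemma big_set2 (T : Type) (idx : T) (op : Monoid.com_law idx) (I : finType)
    (X Y : I) (F : I -> T) :
  X != Y -> \big[op/idx]_(i in [set X; Y]) F i = op (F X) (F Y).
Proof. by move=> neXY; rewrite big_setU1 ?big_set1 // inE. Qed.

Lemma big_set2U (T : Type) (idx : T) (op : Monoid.com_law idx) (I : finType)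
    (X Y : I) (A : {set I}) (F : I -> T) :
  X != Y -> X \notin A -> Y \notin A ->
  \big[op/idx]_(i in [set X; Y] :|: A) F i = op (op (F X) (F Y)) (\big[op/idx]_(i in A) F i).
Proof.
move=> neXY XA YA; rewrite -setUA big_setU1 ?big_setU1 ?Monoid.mulmA //.
by rewrite !inE negb_or neXY.
Qed.

Lemma big_set2D (T : Type) (idx : T) (op : Monoid.com_law idx) (I : finType)
    (X Y : I) (A : {set I}) (F : I -> T) :
  X \in A -> Y \in A -> X != Y ->
  \big[op/idx]_(i in A) F i =
  op (op (F X) (F Y)) (\big[op/idx]_(i in A :\: [set X; Y]) F i).
Proof.
move=> XA YA neXY; rewrite -big_set2U ?inE ?eqxx ?orbT //.
rewrite setDE setUIr setUCr setIT; congr (\big[_/_]_(i in _) _).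
by rewrite (setUidPr _) //; apply/subsetP => i /set2P [->|->].
Qed.

Lemma disjoint_neq (T : finType) (A B : {set T}) :
  [disjoint A & B] -> 0 < #|A| -> A != B.
Proof.
move=> disAB; apply: contraTneq => eqAB; move: disAB; rewrite -eqAB.
by rewrite -setI_eq0 setIid => /eqP ->; rewrite cards0.
Qed.

Section Preimage.
Variables (aT rT : finType) (g : aT -> rT).

Lemma imset_preimset (X : {set rT}) : X \subset g @: setT -> g @: (g @^-1: X) = X.
Proof.
move=> Xg; apply/setP => y; apply/imsetP/idP => [[t] | yX]; first by rewrite inE => ? ->.
by case/imsetP: (subsetP Xg y yX) => t _ eq_y; exists t; rewrite // inE -eq_y.
Qed.

Lemma card_preimset_im (X : {set rT}) :
  injective g -> X \subset g @: setT -> #|g @^-1: X| = #|X|.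
Proof. by move=> g_inj Xg; rewrite -{2}(imset_preimset Xg) card_imset. Qed.

End Preimage.

Section BlockCost.
Local Open Scope ring_scope.
Variables (R : realFieldType) (D : seq R -> R).
Hypothesis hD : D = @Asum R \/ D = @Ssum R.

Lemma perm_D (s t : seq R) : perm_eq s t -> D s = D t.
Proof.
case: hD => -> st.
  apply: (@sum_pairs_perm _ (fun a b => `|b - a|)) => // [a b|a].
    by rewrite distrC.
  by rewrite subrr normr0.
apply: (@sum_pairs_perm _ (fun a b => (b - a) ^+ 2)) => // [a b|a].
  by rewrite -sqrrN opprB.
by rewrite subrr expr0n.
Qed.

Definition block_cost N (x : 'I_N -> R) (B : {set 'I_N}) : R :=
  D [seq x i | i <- enum B].

Lemma block_cost_imset N M (x : 'I_N -> R) (g : 'I_M -> 'I_N) (B : {set 'I_M}) :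
  injective g -> block_cost (x \o g) B = block_cost x (g @: B).
Proof.
move=> g_inj; apply: perm_D; rewrite (map_comp x g); apply: perm_map; apply: uniq_perm.
- by rewrite (map_inj_uniq g_inj) enum_uniq.
- exact: enum_uniq.
by move=> i; rewrite mem_enum; apply/mapP/imsetP => -[t]; rewrite ?mem_enum;
  exists t; rewrite ?mem_enum.
Qed.

Lemma pcost_set2 N (x : 'I_N -> R) (A B : {set 'I_N}) :
  A != B -> pcost D x [set A; B] = block_cost x A + block_cost x B.
Proof. exact: (big_set2 _ (block_cost x)). Qed.

End BlockCost.

Lemma ktuple_partitionP N k (P : {set {set 'I_N}}) : 0 < k ->
  ktuple_partition k P <->
  [/\ forall B, B \in P -> #|B| = k,
      forall i, exists2 B, B \in P & i \in B &
      forall B1 B2 i, B1 \in P -> B2 \in P -> i \in B1 -> i \in B2 -> B1 = B2].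
Proof.
move=> k_gt0; split.
  case=> /and3P [/eqP covP trivP _] cardP; split => // [i|B1 B2 i B1P B2P iB1 iB2].
    have /bigcupP [B BP iB] : i \in cover P by rewrite covP inE.
    by exists B.
  by rewrite -(def_pblock trivP B1P iB1) (def_pblock trivP B2P iB2).
case=> cardP covP uniqP; split => //; apply/and3P; split.
- apply/eqP/setP => i; rewrite inE; apply/bigcupP.
  by have [B BP iB] := covP i; exists B.
- apply/trivIsetP => A B AP BP neAB; rewrite -setI_eq0; apply/set0Pn => -[i].
  by rewrite inE => /andP [iA iB]; move/eqP: neAB; apply; apply: (uniqP _ _ i).
- by apply/negP => /cardP; rewrite cards0 => k0; rewrite -k0 in k_gt0.
Qed.

Definition ktuple_partitionb N k (P : {set {set 'I_N}}) : bool :=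
  partition P [set: 'I_N] && [forall B in P, #|B| == k].

Lemma ktuple_partitionbP N k (P : {set {set 'I_N}}) :
  reflect (ktuple_partition k P) (ktuple_partitionb k P).
Proof.
apply: (iffP andP) => [[partP /forall_inP cardP]|[partP cardP]]; split => //.
  by move=> B /cardP /eqP.
by apply/forall_inP => B /cardP ->.
Qed.

Definition swap_blocks N (Q : {set {set 'I_N}}) (C E L U : {set 'I_N}) :=
  [set L; U] :|: (Q :\: [set C; E]).

Section SwapBlocks.
Variables (N k : nat) (Q : {set {set 'I_N}}) (C E L U : {set 'I_N}).
Hypotheses (k_gt0 : 0 < k) (hQ : ktuple_partition k Q).
Hypotheses (CQ : C \in Q) (EQ : E \in Q).
Hypotheses (cardL : #|L| = k) (cardU : #|U| = k) (disLU : [disjoint L & U]).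
Hypothesis LU_CE : L :|: U = C :|: E.

Let rest := Q :\: [set C; E].

Lemma notin_rest_blocks (B : {set 'I_N}) i : B \in rest -> i \in B -> i \notin L :|: U.
Proof.
have [_ _ uniqQ] := (ktuple_partitionP _ k_gt0).1 hQ.
rewrite LU_CE !inE negb_or => /andP [/andP [neBC neBE] BQ] iB.
apply/negP => /orP [iC | iE].
  by move/eqP: neBC; apply; apply: (uniqQ _ _ i).
by move/eqP: neBE; apply; apply: (uniqQ _ _ i).
Qed.

Lemma swapped_notin_rest (X : {set 'I_N}) : X \subset L :|: U -> #|X| = k -> X \notin rest.
Proof.
move=> XLU cardX; apply/negP => XR.
have [i iX] : exists i, i \in X by apply/card_gt0P; rewrite cardX.
by have := notin_rest_blocks XR iX; rewrite (subsetP XLU).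
Qed.

Lemma swap_blocks_partition : ktuple_partition k (swap_blocks Q C E L U).
Proof.
have [cardQ covQ uniqQ] := (ktuple_partitionP _ k_gt0).1 hQ.
have inLU B i : B \in [set L; U] -> i \in B -> i \in L :|: U.
  by move=> /set2P [->|->] iB; rewrite inE iB ?orbT.
apply/ktuple_partitionP => //; split.
- by move=> B /setUP [/set2P [->|->] // | /setDP [/cardQ]].
- move=> i; have [B BQ iB] := covQ i.
  have [BR | BnR] := boolP (B \in rest); first by exists B; rewrite // inE BR orbT.
  have : i \in L :|: U.
    rewrite LU_CE; move: BnR; rewrite !inE BQ andbT negbK.
    by case/orP => /eqP <-; rewrite iB ?orbT.
  by case/setUP => ?; [exists L | exists U]; rewrite // !inE eqxx ?orbT.
- move=> B1 B2 i /setUP [B1LU | B1R] /setUP [B2LU | B2R] iB1 iB2.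
  + move: B1LU B2LU iB1 iB2 => /set2P [->|->] /set2P [->|->] // iL iU.
      by have := disjointFr disLU iL; rewrite iU.
    by have := disjointFr disLU iU; rewrite iL.
  + by have := notin_rest_blocks B2R iB2; rewrite (inLU B1 i).
  + by have := notin_rest_blocks B1R iB1; rewrite (inLU B2 i).
  + by move: B1R B2R => /setDP [B1Q _] /setDP [B2Q _]; apply: (uniqQ _ _ i).
Qed.

Lemma big_swap_blocks (T : Type) (idx : T) (op : Monoid.com_law idx)
    (F : {set 'I_N} -> T) :
  \big[op/idx]_(B in swap_blocks Q C E L U) F B =
  op (op (F L) (F U)) (\big[op/idx]_(B in rest) F B).
Proof.
by rewrite big_set2U ?disjoint_neq ?cardL ?swapped_notin_rest ?subsetUl ?subsetUr.
Qed.

End SwapBlocks.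

Definition below N (A B : {set 'I_N}) : bool :=
  [forall a in A, forall b in B, a < b].

Lemma belowP N (A B : {set 'I_N}) :
  reflect (forall a b, a \in A -> b \in B -> a < b) (below A B).
Proof.
apply: (iffP forall_inP) => [AB a b aA bB | AB a aA].
  by move/forall_inP: (AB a aA); apply.
by apply/forall_inP => b; apply: AB.
Qed.

Lemma below_disjoint N (A B : {set 'I_N}) : below A B -> [disjoint A & B].
Proof.
move/belowP=> AB; rewrite -setI_eq0; apply/set0Pn => -[i].
by rewrite inE => /andP [iA iB]; have := AB i i iA iB; rewrite ltnn.
Qed.

Definition index_sum N (B : {set 'I_N}) : nat := \sum_(i in B) i.

Definition potential N (Q : {set {set 'I_N}}) : nat := \sum_(B in Q) index_sum B ^ 2.

Lemma ltn_sum_below (I : finType) (F : I -> nat) (A B : {set I}) :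
  #|A| = #|B| -> 0 < #|A| -> (forall a b, a \in A -> b \in B -> F a < F b) ->
  \sum_(a in A) F a < \sum_(b in B) F b.
Proof.
move=> cardAB A_gt0 FAB; have [a1 a1A maxA] := eq_bigmax_cond F A_gt0.
have sumA : \sum_(a in A) F a <= #|A| * F a1.
  by rewrite -maxA -sum_nat_const; apply: leq_sum => a aA; apply: leq_bigmax_cond.
have sumB : #|B| * (F a1).+1 <= \sum_(b in B) F b.
  by rewrite -sum_nat_const; apply: leq_sum => b bB; apply: FAB.
rewrite -cardAB in sumB; nia.
Qed.

Lemma index_sumU N (A B : {set 'I_N}) :
  [disjoint A & B] -> index_sum (A :|: B) = index_sum A + index_sum B.
Proof.
by move=> disAB; rewrite /index_sum -(bigU _ _ _ disAB); apply: eq_bigl => i; rewrite !inE.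
Qed.

Lemma index_sum_lt_below N (L U X : {set 'I_N}) :
  below L U -> X \subset L :|: U -> #|X| = #|L| -> X != L ->
  index_sum L < index_sum X.
Proof.
move/belowP=> LU XLU cardXL neXL.
rewrite /index_sum (big_setID X) [X in (_ < X)](big_setID L) /= setIC ltn_add2l.
have cardD : #|L :\: X| = #|X :\: L|.
  by have := cardsID X L; have := cardsID L X; rewrite setIC; lia.
apply: ltn_sum_below => // [|a b /setDP [aL _] /setDP [bX bnL]].
  rewrite cardD lt0n cards_eq0 setD_eq0; apply: contra neXL => XL.
  by rewrite eqEcard XL cardXL leqnn.
by apply: LU => //; move/subsetP: XLU => /(_ b bX); rewrite inE (negbTE bnL).
Qed.

Lemma sqr_sum_lt (a b c d : nat) :
  a < b -> a < c -> a + d = b + c -> b ^ 2 + c ^ 2 < a ^ 2 + d ^ 2.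
Proof. nia. Qed.

Definition cblock (k n m : nat) : {set 'I_(k * n)} := [set i : 'I_(k * n) | i %/ k == m].

Lemma mem_cblock (k n m : nat) (i : 'I_(k * n)) : 0 < k ->
  (i \in cblock k n m) = (k * m <= i < k * m + k).
Proof.
move=> k_gt0; rewrite inE eqn_leq leq_divRL // -ltnS ltn_divLR //.
by rewrite mulSn [m * k]mulnC; apply/idP/idP => /andP [? ?]; apply/andP; split; lia.
Qed.

Lemma card_cblock (k n m : nat) : 0 < k -> m < n -> #|cblock k n m| = k.
Proof.
move=> k_gt0 lt_mn.
have shift_lt (t : 'I_k) : k * m + t < k * n.
  have : k * m + k <= k * n by rewrite -mulnSr leq_mul2l lt_mn orbT.
  by have := ltn_ord t; lia.
pose shift t := Ordinal (shift_lt t).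
have -> : cblock k n m = shift @: setT.
  apply/setP => i; rewrite mem_cblock //; apply/idP/imsetP => [/andP [lo hi] | [t _ ->]].
    have lt_ik : i - k * m < k by lia.
    by exists (Ordinal lt_ik) => //; apply: val_inj => /=; lia.
  by have := ltn_ord t; rewrite /=; lia.
rewrite card_imset ?cardsT ?card_ord // => t1 t2 /(congr1 val) /= eq12.
by apply: val_inj => /=; lia.
Qed.

Lemma consec_blocks2 k : consec_blocks k 2 = [set cblock k 2 0; cblock k 2 1].
Proof.
apply/setP => X; apply/imsetP/set2P => [[[[|[|m]] lt_m2] _ ->] | [->|->]] //.
- by left.
- by right.
- by exists ord0.
- by exists (@Ordinal 2 1 isT).
Qed.

Lemma cblock2_below k : 0 < k -> below (cblock k 2 0) (cblock k 2 1).
Proof. by move=> k_gt0; apply/belowP => a b; rewrite !mem_cblock //; lia. Qed.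

Lemma cblock2U k : 0 < k -> cblock k 2 0 :|: cblock k 2 1 = setT.
Proof.
move=> k_gt0; apply/setP => t; rewrite !inE.
have : t %/ k < 2 by rewrite ltn_divLR //; have := ltn_ord t; lia.
by case: (t %/ k) => [|[|]].
Qed.

Lemma enum_ord_sorted N (S : {set 'I_N}) : sorted (relpre val ltn) (enum S).
Proof.
have -> : enum S = [seq i <- enum 'I_N | i \in S] by rewrite enumT.
apply: sorted_filter; first by move=> a b c /=; apply: ltn_trans.
by rewrite -sorted_map val_enum_ord iota_ltn_sorted.
Qed.

Lemma increasing_enum N M (S : {set 'I_N}) : #|S| = M ->
  exists g : 'I_M -> 'I_N,
    [/\ injective g, g @: setT = S & forall t1 t2 : 'I_M, t1 < t2 -> g t1 < g t2].
Proof.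
move=> cardS; exists (fun t => enum_val (cast_ord (esym cardS) t)); split.
- by move=> t1 t2 /enum_val_inj /cast_ord_inj.
- apply/setP => i; apply/imsetP/idP => [[t _ ->] | iS]; first exact: enum_valP.
  by exists (cast_ord cardS (enum_rank_in iS i)); rewrite // cast_ordK enum_rankK_in.
- move=> t1 t2 lt12; have x0 : 'I_N := enum_val (cast_ord (esym cardS) t1).
  rewrite !(enum_val_nth x0).
  apply: (sorted_ltn_nth (leT := relpre val ltn)) => //=.
  + by move=> a b c /=; apply: ltn_trans.
  + exact: enum_ord_sorted.
  + by rewrite inE -cardE cardS.
  + by rewrite inE -cardE cardS.
Qed.

Lemma preimset2_partition k M N (g : 'I_M -> 'I_N) (C E : {set 'I_N}) :
  0 < k -> injective g -> g @: setT = C :|: E -> #|C| = k -> #|E| = k ->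
  [disjoint C & E] -> ktuple_partition k [set g @^-1: C; g @^-1: E].
Proof.
move=> k_gt0 g_inj img_g cardC cardE disCE.
apply/ktuple_partitionP => //; split.
- by move=> B /set2P [->|->]; rewrite card_preimset_im // img_g ?subsetUl ?subsetUr.
- move=> t; have : g t \in C :|: E by rewrite -img_g imset_f.
  by case/setUP => gt; [exists (g @^-1: C) | exists (g @^-1: E)]; rewrite !inE ?eqxx ?orbT.
- move=> B1 B2 t /set2P [->|->] /set2P [->|->] //; rewrite !inE => gB1 gB2.
    by rewrite (disjointFr disCE gB1) in gB2.
  by rewrite (disjointFr disCE gB2) in gB1.
Qed.

Section Exchange.
Local Open Scope ring_scope.
Variables (R : realFieldType) (k : nat) (D : seq R -> R).
Hypotheses (k_gt0 : (0 < k)%N) (hD : D = @Asum R \/ D = @Ssum R).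
Hypothesis h2k : forall y : 'I_(k * 2) -> R, sorted_fun y ->
  minimal_ktuple k D y (consec_blocks k 2).

Lemma sorted_split N (x : 'I_N -> R) (C E : {set 'I_N}) :
  sorted_fun x -> #|C| = k -> #|E| = k -> [disjoint C & E] ->
  exists L U : {set 'I_N}, [/\ #|L| = k, #|U| = k, L :|: U = C :|: E, below L U &
    block_cost D x L + block_cost D x U <= block_cost D x C + block_cost D x E].
Proof.
move=> x_sorted cardC cardE disCE.
have cardCE : #|C :|: E| = (k * 2)%N.
  by rewrite cardsU (disjoint_setI0 disCE) cards0 cardC cardE; lia.
have [g [g_inj img_g g_incr]] := increasing_enum cardCE.
exists (g @: cblock k 2 0), (g @: cblock k 2 1); split.
- by rewrite card_imset ?card_cblock.
- by rewrite card_imset ?card_cblock.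
- by rewrite -imsetU cblock2U.
- apply/belowP => _ _ /imsetP [t1 t1lo ->] /imsetP [t2 t2hi ->]; apply: g_incr.
  by move/belowP: (cblock2_below k_gt0); apply.
have y_sorted : sorted_fun (x \o g).
  move=> t1 t2; rewrite leq_eqVlt => /orP [/eqP/val_inj -> // | lt12].
  by apply: x_sorted; apply/ltnW/g_incr.
have cost_preim (X : {set 'I_N}) :
    X \subset C :|: E -> block_cost D (x \o g) (g @^-1: X) = block_cost D x X.
  by move=> XCE; rewrite block_cost_imset ?imset_preimset ?img_g.
have neCE : g @^-1: C != g @^-1: E.
  apply: disjoint_neq; last by rewrite card_preimset_im ?img_g ?subsetUl ?cardC.
  by rewrite -setI_eq0 -preimsetI (disjoint_setI0 disCE) preimset0.
have ne01 : cblock k 2 0 != cblock k 2 1.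
  by apply: disjoint_neq; rewrite ?below_disjoint ?cblock2_below ?card_cblock.
have := (h2k y_sorted).2 _ (preimset2_partition k_gt0 g_inj img_g cardC cardE disCE).
rewrite consec_blocks2 !pcost_set2 // (cost_preim C) ?subsetUl // (cost_preim E) ?subsetUr //.
by rewrite !(block_cost_imset hD x _ g_inj).
Qed.

Lemma exchange_unordered N (x : 'I_N -> R) (Q : {set {set 'I_N}}) (C E : {set 'I_N}) :
  sorted_fun x -> ktuple_partition k Q -> C \in Q -> E \in Q -> C != E ->
  ~~ below C E -> ~~ below E C ->
  exists Q', [/\ ktuple_partition k Q', pcost D x Q' <= pcost D x Q &
                 (potential Q < potential Q')%N].
Proof.
move=> x_sorted hQ CQ EQ neCE nCE nEC.
have [cardQ _ uniqQ] := (ktuple_partitionP _ k_gt0).1 hQ.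
have disCE : [disjoint C & E].
  rewrite -setI_eq0; apply/set0Pn => -[i]; rewrite inE => /andP [iC iE].
  by move/eqP: neCE; apply; apply: (uniqQ _ _ i).
have [L [U [cardL cardU LU_CE LbU costLU]]] :=
  sorted_split x_sorted (cardQ _ CQ) (cardQ _ EQ) disCE.
have disLU := below_disjoint LbU.
have ordered_if_lower (X Y : {set 'I_N}) :
    L = X -> [disjoint X & Y] -> X :|: Y = C :|: E -> below X Y.
  move=> eqLX disXY XY; apply/belowP => a b aX bY; move/belowP: LbU; apply; first by rewrite eqLX.
  have : b \in L :|: U by rewrite LU_CE -XY inE bY orbT.
  by case/setUP => // bL; rewrite eqLX in bL; rewrite (disjointFr disXY bL) in bY.
have ltLC : (index_sum L < index_sum C)%N.
  apply: index_sum_lt_below LbU _ _ _; rewrite ?LU_CE ?subsetUl ?cardL ?cardQ //.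
  by apply: contra nCE => /eqP eqCL; apply: ordered_if_lower.
have ltLE : (index_sum L < index_sum E)%N.
  apply: index_sum_lt_below LbU _ _ _; rewrite ?LU_CE ?subsetUr ?cardL ?cardQ //.
  apply: contra nEC => /eqP eqEL; apply: ordered_if_lower; rewrite // 1?disjoint_sym //.
  by rewrite setUC.
have sumLU : (index_sum L + index_sum U = index_sum C + index_sum E)%N.
  by rewrite -!index_sumU // LU_CE.
have swapE := big_swap_blocks k_gt0 hQ CQ EQ cardL cardU disLU LU_CE.
exists (swap_blocks Q C E L U); split.
- exact: swap_blocks_partition.
- by rewrite /pcost (big_set2D _ _ CQ EQ neCE) swapE lerD2r.
- rewrite /potential (big_set2D _ _ CQ EQ neCE) swapE ltn_add2r.
  exact: sqr_sum_lt.
Qed.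

Lemma exists_ordered_partition N (x : 'I_N -> R) (Q0 : {set {set 'I_N}}) :
  sorted_fun x -> ktuple_partition k Q0 ->
  exists2 Q : {set {set 'I_N}}, ktuple_partition k Q /\ pcost D x Q <= pcost D x Q0 &
    {in Q &, forall C E, C != E -> below C E || below E C}.
Proof.
move=> x_sorted hQ0.
pose admissible Q := ktuple_partitionb k Q && (pcost D x Q <= pcost D x Q0).
have adm0 : admissible Q0 by rewrite /admissible lexx andbT; apply/ktuple_partitionbP.
have [Q /andP [/ktuple_partitionbP hQ costQ] maxQ] := arg_maxnP (@potential N) adm0.
exists Q => // C E CQ EQ neCE; apply/negPn/negP => /norP [nCE nEC].
have [Q' [hQ' costQ' ltQ']] := exchange_unordered x_sorted hQ CQ EQ neCE nCE nEC.
have : admissible Q' by apply/andP; split; [apply/ktuple_partitionbP | exact: le_trans costQ].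
by move/maxQ; rewrite /= leqNgt ltQ'.
Qed.

End Exchange.

Lemma divn_lt_ord k n (i : 'I_(k * n)) : 0 < k -> i %/ k < n.
Proof. by move=> k_gt0; rewrite ltn_divLR //; have := ltn_ord i; lia. Qed.

Lemma consec_blocks_partition k n : 0 < k -> ktuple_partition k (consec_blocks k n).
Proof.
move=> k_gt0; apply/ktuple_partitionP => //; split.
- by move=> B /imsetP [m _ ->]; exact: (card_cblock k_gt0 (ltn_ord m)).
- move=> i; exists (cblock k n (i %/ k)); last by rewrite inE.
  by apply/imsetP; exists (Ordinal (divn_lt_ord i k_gt0)).
- by move=> B1 B2 i /imsetP [m1 _ ->] /imsetP [m2 _ ->]; rewrite !inE => /eqP <- /eqP <-.
Qed.

Section OrderedPartition.
Variables (k n : nat) (Q : {set {set 'I_(k * n)}}).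
Hypotheses (k_gt0 : 0 < k) (hQ : ktuple_partition k Q).
Hypothesis ordQ : {in Q &, forall C E, C != E -> below C E || below E C}.

Lemma cblock_mem_step m :
  m < n -> (forall m', m' < m -> cblock k n m' \in Q) -> cblock k n m \in Q.
Proof.
move=> lt_mn IH; have [cardQ covQ uniqQ] := (ktuple_partitionP _ k_gt0).1 hQ.
have lt_km : k * m < k * n by rewrite ltn_mul2l k_gt0.
have [C CQ kmC] := covQ (Ordinal lt_km).
have lowC c : c \in C -> k * m <= c.
  move=> cC; rewrite leqNgt; apply/negP => lt_c.
  have lt_cm : c %/ k < m by rewrite ltn_divLR //; lia.
  have c_blk : c \in cblock k n (c %/ k) by rewrite inE.
  have eqC := uniqQ _ _ c CQ (IH _ lt_cm) cC c_blk.
  by move: kmC; rewrite eqC inE /= mulKn // => /eqP; lia.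
suff -> : cblock k n m = C by [].
apply/eqP; rewrite eq_sym eqEcard card_cblock // (cardQ _ CQ) leqnn andbT.
apply/subsetP => c cC; rewrite mem_cblock // lowC //= ltnNge; apply/negP => high_c.
have c_out : c \notin cblock k n m by rewrite mem_cblock // ltnNge high_c andbF.
have [j jB jC] : exists2 j, j \in cblock k n m & j \notin C.
  apply/subsetPn/negP => sub.
  have : #|c |: cblock k n m| <= #|C| by apply: subset_leq_card; rewrite subUset sub1set cC.
  by rewrite cardsU1 c_out card_cblock // (cardQ _ CQ) ltnn.
have [E EQ jE] := covQ j.
have neCE : C != E by apply: contraNneq jC => ->.
move: jB; rewrite mem_cblock // => /andP [lo_j hi_j].
case/orP: (ordQ CQ EQ neCE) => /belowP ordCE.
  by have := ordCE c j cC jE; lia.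
by have := ordCE j _ jE kmC; rewrite /=; lia.
Qed.

Lemma cblock_mem m : m < n -> cblock k n m \in Q.
Proof.
induction m as [m IH] using ltn_ind => lt_mn.
by apply: cblock_mem_step => // m' lt_m'm; apply/IH/(ltn_trans lt_m'm).
Qed.

Lemma ordered_partition_consec : Q = consec_blocks k n.
Proof.
have [cardQ _ uniqQ] := (ktuple_partitionP _ k_gt0).1 hQ.
apply/setP => B; apply/idP/imsetP => [BQ | [m _ ->]]; last exact: (cblock_mem (ltn_ord m)).
have [i iB] : exists i, i \in B by apply/card_gt0P; rewrite cardQ.
exists (Ordinal (divn_lt_ord i k_gt0)) => //=.
by apply: (uniqQ _ _ i) => //; [apply/cblock_mem/divn_lt_ord | rewrite inE].
Qed.

End OrderedPartition.

Theorem theorem1p4 (R : realFieldType) (k : nat) (hk : (2 <= k)%N)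
    (D : seq R -> R) (hD : D = @Asum R \/ D = @Ssum R)
    (h2k : forall x : 'I_(k * 2) -> R, sorted_fun x ->
             minimal_ktuple k D x (consec_blocks k 2)) :
  forall (n : nat), (1 <= n)%N ->
  forall x : 'I_(k * n) -> R, sorted_fun x ->
    minimal_ktuple k D x (consec_blocks k n).
Proof.
move=> n _ x x_sorted; have k_gt0 : (0 < k)%N by apply: leq_trans hk.
split=> [|Q0 hQ0]; first exact: consec_blocks_partition.
have [Q [hQ costQ] ordQ] := exists_ordered_partition k_gt0 hD h2k x_sorted hQ0.
by rewrite -(ordered_partition_consec k_gt0 hQ ordQ).
Qed.
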